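(* Let $W:\mathcal X\to\mathcal Y$ and $Q:\mathcal X\to\mathcal Z$ be DMCs with $W\preccurlyeq Q$, and fix an input distribution. Then $$I(Q)-I(W)\ \ge\ \sum_{z\in\mathcal Z}\frac12\sum_{y\in\mathcal A_z}\pi_y\|\mathbf z-\mathbf y\|_2^2 .$$
   Context: $\mathcal X,\mathcal Y,\mathcal Z$ are finite, pairwise disjoint. $W\preccurlyeq Q$ means there is a channel $\Phi:\mathcal Z\to\mathcal Y$ with $W(y|x)=\sum_zQ(z|x)\Phi(y|z)$. A fixed input distribution $\pi(x)>0$ induces output probabilities $\pi_y=\sum_x\pi(x)W(y|x)$ and $\pi_z=\sum_x\pi(x)Q(z|x)$ (assumed positive), and posterior vectors $\mathbf y=(y_x)_{x\in\mathcal X}$, $y_x=\pi(x)W(y|x)/\pi_y$, and $\mathbf z=(z_x)_{x\in\mathcal X}$, $z_x=\pi(x)Q(z|x)/\pi_z$. $I(\cdot)$ is input–output mutual information (natural log). For $z\in\mathcal Z$, $\mathcal A_z=\{y\in\mathcal Y: z=\arg\min_{z'\in\mathcal Z}\|\mathbf z'-\mathbf y\|_2^2\}$, where ties in the argmin are broken in a fixed arbitrary way, so that the sets $\mathcal A_z$ partition $\mathcal Y$; $\|\cdot\|_2$ is the Euclidean norm. *)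

(* Finite alphabets are represented as index ranges {0,...,n-1}:
   X = {0..nx-1}, Y = {0..ny-1}, Z = {0..nz-1}.  A channel W : X -> Y is a
   function W : nat -> nat -> R with W x y = W(y|x). *)
From Stdlib Require Import Reals List.
Import ListNotations.
Open Scope R_scope.

Definition rsum (n : nat) (f : nat -> R) : R :=
  fold_right Rplus 0 (map f (seq 0 n)).

Definition is_channel (nx ny : nat) (W : nat -> nat -> R) : Prop :=
  (forall x y, (x < nx)%nat -> (y < ny)%nat -> 0 <= W x y) /\
  (forall x, (x < nx)%nat -> rsum ny (fun y => W x y) = 1).

Definition degraded (nx ny nz : nat) (W Q : nat -> nat -> R) : Prop :=
  exists Phi : nat -> nat -> R,
    is_channel nz ny Phi /\
    forall x y, (x < nx)%nat -> (y < ny)%nat ->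
      W x y = rsum nz (fun z => Q x z * Phi z y).

Definition out_prob (nx : nat) (pi : nat -> R) (W : nat -> nat -> R) (y : nat) : R :=
  rsum nx (fun x => pi x * W x y).

Definition xlogxy (a b : R) : R :=
  if Req_EM_T a 0 then 0 else a * ln (a / b).

Definition mutual_info (nx ny : nat) (pi : nat -> R) (W : nat -> nat -> R) : R :=
  rsum nx (fun x => rsum ny (fun y =>
    pi x * xlogxy (W x y) (out_prob nx pi W y))).

Definition posterior (nx : nat) (pi : nat -> R) (W : nat -> nat -> R) (y x : nat) : R :=
  pi x * W x y / out_prob nx pi W y.

(* || z - y ||_2^2 between posterior vectors of z (for Q) and y (for W) *)
Definition post_dist2 (nx : nat) (pi : nat -> R) (W Q : nat -> nat -> R) (z y : nat) : R :=
  rsum nx (fun x => (posterior nx pi Q z x - posterior nx pi W y x) ^ 2).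

From Stdlib Require Import Reals List Lra Lia.
From Coquelicot Require Import Coquelicot.
Open Scope R_scope.

(* Since W = Q Phi, both mutual informations are sums over (x, z, y) with weight
   pi(x) Q(z|x) Phi(y|z), and their difference is the weighted sum
   Sum_{z,y} pi_z Phi(y|z) D(z || y) of relative entropies between posterior
   vectors.  Termwise, (p - q)^2 / 2 <= p ln (p / q) - p + q on [0, 1], so each
   D(z || y) is at least ||z - y||^2 / 2 >= ||a(y) - y||^2 / 2, and
   Sum_z pi_z Phi(y|z) = pi_y. *)

Lemma rsum_S n f : rsum (S n) f = rsum n f + f n.
Proof.
unfold rsum; rewrite seq_S, map_app, fold_right_app; simpl.
induction (map f (seq 0 n)); simpl; lra.
Qed.

Lemma rsum_ext n f g : (forall i, (i < n)%nat -> f i = g i) -> rsum n f = rsum n g.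
Proof. induction n; intros Hfg; [reflexivity|]; rewrite !rsum_S, IHn, Hfg; auto. Qed.

Lemma rsum_const0 n : rsum n (fun _ => 0) = 0.
Proof. induction n; [reflexivity|]; rewrite rsum_S, IHn; lra. Qed.

Lemma rsum_plus n f g : rsum n (fun i => f i + g i) = rsum n f + rsum n g.
Proof. induction n; [unfold rsum; simpl; lra|]; rewrite !rsum_S, IHn; lra. Qed.

Lemma rsum_minus n f g : rsum n (fun i => f i - g i) = rsum n f - rsum n g.
Proof. induction n; [unfold rsum; simpl; lra|]; rewrite !rsum_S, IHn; lra. Qed.

Lemma rsum_scal_l n c f : rsum n (fun i => c * f i) = c * rsum n f.
Proof. induction n; [unfold rsum; simpl; lra|]; rewrite !rsum_S, IHn; lra. Qed.

Lemma rsum_scal_r n c f : rsum n (fun i => f i * c) = rsum n f * c.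
Proof. induction n; [unfold rsum; simpl; lra|]; rewrite !rsum_S, IHn; lra. Qed.

Lemma rsum_le n f g : (forall i, (i < n)%nat -> f i <= g i) -> rsum n f <= rsum n g.
Proof.
induction n; intros Hfg; [unfold rsum; simpl; lra|]; rewrite !rsum_S.
apply Rplus_le_compat; auto.
Qed.

Lemma rsum_nonneg n f : (forall i, (i < n)%nat -> 0 <= f i) -> 0 <= rsum n f.
Proof. intros Hf; rewrite <- (rsum_const0 n); apply rsum_le; auto. Qed.

Lemma rsum_term_le n f i :
  (forall j, (j < n)%nat -> 0 <= f j) -> (i < n)%nat -> f i <= rsum n f.
Proof.
induction n; intros Hf Hi; [lia|]; rewrite rsum_S.
destruct (Nat.eq_dec i n) as [->|Hne].
- assert (0 <= rsum n f) by (apply rsum_nonneg; auto); lra.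
- assert (f i <= rsum n f) by (apply IHn; auto; lia); assert (0 <= f n) by auto; lra.
Qed.

Lemma rsum_swap n m (f : nat -> nat -> R) :
  rsum n (fun i => rsum m (fun j => f i j)) = rsum m (fun j => rsum n (fun i => f i j)).
Proof.
induction n; simpl.
- rewrite rsum_const0; reflexivity.
- rewrite rsum_S, IHn, <- rsum_plus; apply rsum_ext; intros; rewrite rsum_S; lra.
Qed.

Lemma rsum_eqb n k f : (k < n)%nat -> rsum n (fun i => if Nat.eqb k i then f i else 0) = f k.
Proof.
induction n; intros Hk; [lia|]; rewrite rsum_S.
destruct (Nat.eq_dec k n) as [->|Hne].
- rewrite Nat.eqb_refl, (rsum_ext _ _ (fun _ => 0)), rsum_const0; [lra|].
  intros i Hi; destruct (Nat.eqb_spec n i); [lia | reflexivity].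
- rewrite IHn by lia; destruct (Nat.eqb_spec k n); [lia | lra].
Qed.

Lemma rsum_fiber n m (k : nat -> nat) (f : nat -> nat -> R) :
  (forall i, (i < m)%nat -> (k i < n)%nat) ->
  rsum n (fun j => rsum m (fun i => if Nat.eqb (k i) j then f i j else 0)) =
  rsum m (fun i => f i (k i)).
Proof.
intros Hk; rewrite rsum_swap; apply rsum_ext; intros i Hi.
apply (rsum_eqb n (k i) (f i)); auto.
Qed.

Lemma ln_ge_2_sub1_div_add1 u : 1 <= u -> 2 * (u - 1) / (u + 1) <= ln u.
Proof.
intros Hu; destruct (Req_dec u 1) as [->|Hne].
{ rewrite ln_1; lra. }
set (h := fun t => ln t - 2 + 4 / (t + 1)).
assert (Dh : forall c, 1 <= c <= u -> derivable_pt_lim h c ((c - 1) ^ 2 / (c * (c + 1) ^ 2))).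
{ intros c Hc; apply is_derive_Reals; unfold h; auto_derive; [lra | field; lra]. }
destruct (MVT_cor2 h _ 1 u ltac:(lra) Dh) as [c [Hmvt Hc]].
unfold h in Hmvt; rewrite ln_1 in Hmvt.
assert (0 <= (c - 1) ^ 2 / (c * (c + 1) ^ 2) * (u - 1)).
{ apply Rmult_le_pos; [|lra].
  apply Rdiv_le_0_compat; [apply pow2_ge_0 | apply Rmult_lt_0_compat; [lra | apply pow_lt; lra]]. }
replace (2 * (u - 1) / (u + 1)) with (2 - 4 / (u + 1)) by (field; lra).
lra.
Qed.

Lemma ln_le_half_sub_inv v : 1 <= v -> ln v <= (v - / v) / 2.
Proof.
intros Hv; destruct (Req_dec v 1) as [->|Hne].
{ rewrite ln_1, Rinv_1; lra. }
set (h := fun t => (t - / t) / 2 - ln t).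
assert (Dh : forall c, 1 <= c <= v -> derivable_pt_lim h c ((c - 1) ^ 2 / (2 * c ^ 2))).
{ intros c Hc; apply is_derive_Reals; unfold h; auto_derive; [lra | field; lra]. }
destruct (MVT_cor2 h _ 1 v ltac:(lra) Dh) as [c [Hmvt Hc]].
unfold h in Hmvt; rewrite ln_1, Rinv_1 in Hmvt.
assert (0 <= (c - 1) ^ 2 / (2 * c ^ 2) * (v - 1)).
{ apply Rmult_le_pos; [|lra].
  apply Rdiv_le_0_compat; [apply pow2_ge_0 | apply Rmult_lt_0_compat; [lra | apply pow_lt; lra]]. }
lra.
Qed.

Lemma one_le_div a b : 0 < b -> b <= a -> 1 <= a / b.
Proof.
intros Hb Hba; apply Rmult_le_reg_r with b; [lra|].
unfold Rdiv; rewrite Rmult_assoc, Rinv_l, Rmult_1_r; lra.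
Qed.

(* The two cases [q <= p] and [p < q] give the sharper bounds
   [(p - q)^2 / (p + q)] and [(p - q)^2 / (2 q)]. *)
Lemma half_sq_sub_le_xlnx_div p q :
  0 <= p <= 1 -> 0 <= q <= 1 -> (0 < p -> 0 < q) ->
  (p - q) ^ 2 / 2 <= p * ln (p / q) - p + q.
Proof.
intros Hp Hq Hsupp; destruct (Req_dec p 0) as [->|Hp0].
{ rewrite Rmult_0_l; nra. }
assert (0 < p) by lra; assert (0 < q) by auto.
destruct (Rle_dec q p) as [Hqp|Hpq].
- assert (Hln := ln_ge_2_sub1_div_add1 (p / q) (one_le_div p q ltac:(lra) Hqp)).
  replace (2 * (p / q - 1) / (p / q + 1)) with (2 * (p - q) / (p + q)) in Hln by (field; lra).
  assert (p * (2 * (p - q) / (p + q)) <= p * ln (p / q)) by (apply Rmult_le_compat_l; lra).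
  assert ((p - q) ^ 2 / 2 <= (p - q) ^ 2 / (p + q)).
  { apply Rmult_le_compat_l; [apply pow2_ge_0 | apply Rinv_le_contravar; lra]. }
  replace (p * (2 * (p - q) / (p + q))) with ((p - q) ^ 2 / (p + q) + p - q) in * by (field; lra).
  lra.
- assert (Hln := ln_le_half_sub_inv (q / p) (one_le_div q p ltac:(lra) ltac:(lra))).
  replace (ln (p / q)) with (- ln (q / p))
    by (rewrite <- ln_Rinv by (apply Rdiv_lt_0_compat; lra); f_equal; field; lra).
  replace ((q / p - / (q / p)) / 2) with ((q ^ 2 - p ^ 2) / (2 * p * q)) in Hln by (field; lra).
  assert (p * ln (q / p) <= p * ((q ^ 2 - p ^ 2) / (2 * p * q))) by (apply Rmult_le_compat_l; lra).
  assert ((p - q) ^ 2 / 2 <= (p - q) ^ 2 / (2 * q)).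
  { apply Rmult_le_compat_l; [apply pow2_ge_0 | apply Rinv_le_contravar; lra]. }
  replace (p * ((q ^ 2 - p ^ 2) / (2 * p * q))) with (q - p - (p - q) ^ 2 / (2 * q)) in * by (field; lra).
  lra.
Qed.

Definition rel_entropy (n : nat) (p q : nat -> R) : R :=
  rsum n (fun i => p i * ln (p i / q i)).

Lemma half_sqdist_le_rel_entropy n p q :
  (forall i, (i < n)%nat -> 0 <= p i <= 1) ->
  (forall i, (i < n)%nat -> 0 <= q i <= 1) ->
  (forall i, (i < n)%nat -> 0 < p i -> 0 < q i) ->
  rsum n p = rsum n q ->
  / 2 * rsum n (fun i => (p i - q i) ^ 2) <= rel_entropy n p q.
Proof.
intros Hp Hq Hsupp Hmass.
replace (rel_entropy n p q) with (rsum n (fun i => p i * ln (p i / q i) - p i + q i))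
  by (unfold rel_entropy; rewrite rsum_plus, rsum_minus, Hmass; ring).
rewrite <- rsum_scal_l; apply rsum_le; intros i Hi.
rewrite Rmult_comm; apply half_sq_sub_le_xlnx_div; auto.
Qed.

Lemma posterior_bounds nx pi (W : nat -> nat -> R) y x :
  (forall x, (x < nx)%nat -> 0 < pi x) -> (forall x, (x < nx)%nat -> 0 <= W x y) ->
  0 < out_prob nx pi W y -> (x < nx)%nat ->
  0 <= posterior nx pi W y x <= 1.
Proof.
intros Hpi HW Hout Hx; unfold posterior.
assert (Hjoint : forall x, (x < nx)%nat -> 0 <= pi x * W x y)
  by (intros x' Hx'; apply Rmult_le_pos; [left|]; auto).
assert (pi x * W x y <= out_prob nx pi W y)
  by (apply (rsum_term_le nx (fun x => pi x * W x y)); auto).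
split.
- apply Rdiv_le_0_compat; auto.
- apply Rmult_le_reg_r with (out_prob nx pi W y); [lra|].
  unfold Rdiv; rewrite Rmult_assoc, Rinv_l, Rmult_1_r; lra.
Qed.

Lemma rsum_posterior nx pi (W : nat -> nat -> R) y :
  0 < out_prob nx pi W y -> rsum nx (posterior nx pi W y) = 1.
Proof.
intros Hout; unfold posterior, Rdiv.
rewrite rsum_scal_r; change (rsum nx _) with (out_prob nx pi W y); field; lra.
Qed.

Section DegradedChannels.

Variables (nx ny nz : nat) (pi : nat -> R) (W Q Phi : nat -> nat -> R).
Hypothesis HW : is_channel nx ny W.
Hypothesis HQ : is_channel nx nz Q.
Hypothesis HPhi : is_channel nz ny Phi.
Hypothesis HWQ : forall x y, (x < nx)%nat -> (y < ny)%nat ->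
  W x y = rsum nz (fun z => Q x z * Phi z y).
Hypothesis Hpi : forall x, (x < nx)%nat -> 0 < pi x.

Local Notation PW := (out_prob nx pi W).
Local Notation PQ := (out_prob nx pi Q).

Lemma out_prob_degraded y : (y < ny)%nat -> PW y = rsum nz (fun z => PQ z * Phi z y).
Proof.
intros Hy; unfold out_prob.
rewrite (rsum_ext nx _ (fun x => rsum nz (fun z => pi x * Q x z * Phi z y))).
- rewrite rsum_swap; apply rsum_ext; intros z Hz; rewrite rsum_scal_r; reflexivity.
- intros x Hx; rewrite HWQ, <- rsum_scal_l by auto; apply rsum_ext; intros; ring.
Qed.

Lemma degraded_support x y z : (x < nx)%nat -> (y < ny)%nat -> (z < nz)%nat ->
  0 < Q x z -> 0 < Phi z y -> 0 < W x y.
Proof.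
intros Hx Hy Hz HQxz HPhizy; rewrite HWQ by auto.
apply Rlt_le_trans with (Q x z * Phi z y); [apply Rmult_lt_0_compat; auto|].
destruct HQ as [HQ0 _]; destruct HPhi as [HPhi0 _].
apply (rsum_term_le nz (fun z' => Q x z' * Phi z' y)); auto.
intros z' Hz'; apply Rmult_le_pos; auto.
Qed.

Lemma mutual_info_expand_Q : mutual_info nx nz pi Q =
  rsum nz (fun z => rsum ny (fun y => rsum nx (fun x =>
    pi x * Q x z * Phi z y * ln (Q x z / PQ z)))).
Proof.
unfold mutual_info.
rewrite (rsum_ext nx _ (fun x => rsum nz (fun z => rsum ny (fun y =>
  pi x * Q x z * Phi z y * ln (Q x z / PQ z))))).
- rewrite rsum_swap; apply rsum_ext; intros; apply rsum_swap.
- intros x Hx; apply rsum_ext; intros z Hz; destruct HPhi as [_ HPhi1].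
  rewrite (rsum_ext ny _ (fun y => Phi z y * (pi x * xlogxy (Q x z) (PQ z))))
    by (intros; unfold xlogxy; destruct Req_EM_T as [->|]; ring).
  rewrite rsum_scal_r, HPhi1 by auto; ring.
Qed.

Lemma mutual_info_expand_W : mutual_info nx ny pi W =
  rsum nz (fun z => rsum ny (fun y => rsum nx (fun x =>
    pi x * Q x z * Phi z y * ln (W x y / PW y)))).
Proof.
unfold mutual_info.
rewrite (rsum_ext nx _ (fun x => rsum nz (fun z => rsum ny (fun y =>
  pi x * Q x z * Phi z y * ln (W x y / PW y))))).
- rewrite rsum_swap; apply rsum_ext; intros; apply rsum_swap.
- intros x Hx; rewrite <- rsum_swap; apply rsum_ext; intros y Hy.
  rewrite (rsum_ext nz _ (fun z => Q x z * Phi z y * (pi x * ln (W x y / PW y))))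
    by (intros; ring).
  rewrite rsum_scal_r, <- HWQ by auto; unfold xlogxy; destruct Req_EM_T as [->|]; ring.
Qed.

Hypothesis HPW : forall y, (y < ny)%nat -> 0 < PW y.
Hypothesis HPQ : forall z, (z < nz)%nat -> 0 < PQ z.

(* [pi x] cancels in the ratio of posteriors, and the terms with [Q x z = 0] or
   [Phi z y = 0] vanish on both sides. *)
Lemma info_gap_term z y : (z < nz)%nat -> (y < ny)%nat ->
  rsum nx (fun x => pi x * Q x z * Phi z y * (ln (Q x z / PQ z) - ln (W x y / PW y))) =
  PQ z * Phi z y * rel_entropy nx (posterior nx pi Q z) (posterior nx pi W y).
Proof.
intros Hz Hy; unfold rel_entropy; rewrite <- rsum_scal_l.
apply rsum_ext; intros x Hx; unfold posterior.
assert (HQxz0 : 0 <= Q x z) by (apply HQ; auto).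
assert (HPhizy0 : 0 <= Phi z y) by (apply HPhi; auto).
assert (HPWy := HPW y Hy); assert (HPQz := HPQ z Hz); assert (Hpix := Hpi x Hx).
destruct (Req_dec (Q x z) 0) as [->|HQxz]; [unfold Rdiv; ring|].
destruct (Req_dec (Phi z y) 0) as [->|HPhizy]; [ring|].
assert (HWxy : 0 < W x y) by (apply (degraded_support x y z); auto; lra).
replace (pi x * Q x z / PQ z / (pi x * W x y / PW y)) with ((Q x z / PQ z) / (W x y / PW y))
  by (field; repeat split; lra).
rewrite (ln_div (Q x z / PQ z)) by (apply Rdiv_lt_0_compat; lra).
field; lra.
Qed.

Lemma info_gap_eq_rel_entropy :
  mutual_info nx nz pi Q - mutual_info nx ny pi W =
  rsum nz (fun z => rsum ny (fun y =>
    PQ z * Phi z y * rel_entropy nx (posterior nx pi Q z) (posterior nx pi W y))).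
Proof.
rewrite mutual_info_expand_Q, mutual_info_expand_W, <- rsum_minus.
apply rsum_ext; intros z Hz; rewrite <- rsum_minus.
apply rsum_ext; intros y Hy; rewrite <- info_gap_term, <- rsum_minus by auto.
apply rsum_ext; intros; ring.
Qed.

Lemma half_post_dist2_le_rel_entropy z y : (z < nz)%nat -> (y < ny)%nat -> 0 < Phi z y ->
  / 2 * post_dist2 nx pi W Q z y <=
  rel_entropy nx (posterior nx pi Q z) (posterior nx pi W y).
Proof.
intros Hz Hy HPhizy; destruct HW as [HW0 _]; destruct HQ as [HQ0 _].
apply half_sqdist_le_rel_entropy.
- intros x Hx; apply posterior_bounds; auto.
- intros x Hx; apply posterior_bounds; auto.
- intros x Hx Hpost; unfold posterior in *.
  assert (0 < Q x z).
  { destruct (Req_dec (Q x z) 0) as [HQxz|HQxz]; [rewrite HQxz in Hpost; unfold Rdiv in Hpost; lra|].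
    specialize (HQ0 x z Hx Hz); lra. }
  apply Rdiv_lt_0_compat; auto.
  apply Rmult_lt_0_compat; auto; apply (degraded_support x y z); auto.
- rewrite !rsum_posterior; auto.
Qed.

Lemma info_gap_ge_post_dist2 :
  rsum nz (fun z => rsum ny (fun y => PQ z * Phi z y * (/ 2 * post_dist2 nx pi W Q z y))) <=
  mutual_info nx nz pi Q - mutual_info nx ny pi W.
Proof.
rewrite info_gap_eq_rel_entropy.
apply rsum_le; intros z Hz; apply rsum_le; intros y Hy.
destruct (Req_dec (Phi z y) 0) as [->|HPhizy]; [lra|].
assert (0 < Phi z y) by (destruct HPhi as [HPhi0 _]; specialize (HPhi0 z y Hz Hy); lra).
apply Rmult_le_compat_l; [apply Rmult_le_pos; [left; auto | lra]|].
apply half_post_dist2_le_rel_entropy; auto.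
Qed.

End DegradedChannels.

Theorem lemma10 (nx ny nz : nat) (W Q : nat -> nat -> R) (pi : nat -> R)
  (a : nat -> nat) :
  is_channel nx ny W ->
  is_channel nx nz Q ->
  degraded nx ny nz W Q ->
  (forall x, (x < nx)%nat -> 0 < pi x) ->
  rsum nx pi = 1 ->
  (forall y, (y < ny)%nat -> 0 < out_prob nx pi W y) ->
  (forall z, (z < nz)%nat -> 0 < out_prob nx pi Q z) ->
  (forall y, (y < ny)%nat -> (a y < nz)%nat) ->
  (forall y z', (y < ny)%nat -> (z' < nz)%nat ->
     post_dist2 nx pi W Q (a y) y <= post_dist2 nx pi W Q z' y) ->
  mutual_info nx nz pi Q - mutual_info nx ny pi W >=
  rsum nz (fun z => / 2 * rsum ny (fun y =>
     if Nat.eqb (a y) z then out_prob nx pi W y * post_dist2 nx pi W Q z y else 0)).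
Proof.
intros HW HQ [Phi [HPhi HWQ]] Hpi _ HPW HPQ Ha Hnearest.
apply Rle_ge; eapply Rle_trans; [|apply (info_gap_ge_post_dist2 nx ny nz pi W Q Phi); auto].
rewrite (rsum_ext nz _ (fun z => rsum ny (fun y =>
  if Nat.eqb (a y) z then / 2 * (out_prob nx pi W y * post_dist2 nx pi W Q z y) else 0))).
2:{ intros z Hz; rewrite <- rsum_scal_l; apply rsum_ext; intros y Hy.
    destruct Nat.eqb; ring. }
rewrite rsum_fiber by auto.
rewrite <- rsum_swap; apply rsum_le; intros y Hy.
rewrite (out_prob_degraded nx ny nz pi W Q Phi) by auto.
rewrite <- rsum_scal_r, <- rsum_scal_l; apply rsum_le; intros z Hz.
destruct HQ as [HQ0 _]; destruct HPhi as [HPhi0 _].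
assert (0 <= out_prob nx pi Q z * Phi z y) by (apply Rmult_le_pos; [left|]; auto).
specialize (Hnearest y z Hy Hz); nra.
Qed.
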